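(* Let $\rho\in\mathrm{Irr}(W)$. If there exists $\eta\in\mathrm X(\rho)$ with $\rho^*\otimes\epsilon\simeq\rho\otimes\eta$, then such $\eta$ is unique. The corresponding embedding $\epsilon\otimes\eta\hookrightarrow\rho^*\otimes\rho^*$ defines, up to a scalar, a nondegenerate bilinear form $\langle\,,\rangle$ on $V_\rho$ satisfying $\langle\rho(w)x,\rho(w)y\rangle=\epsilon(w)\eta(w)\langle x,y\rangle$; letting $\mathfrak{osp}(V_\rho)\subset\mathfrak{sl}(V_\rho)$ be the Lie subalgebra of endomorphisms $u$ with $\langle ux,y\rangle+\langle x,uy\rangle=0$, one has $\rho(\mathcal H')\subset\mathfrak{osp}(V_\rho)$. If moreover the form is symmetric and $\dim\rho>1$, then it is hyperbolic (i.e. $V_\rho$ is an orthogonal direct sum of hyperbolic planes).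
   Context: $W\subset\mathrm{GL}(V)$ is a finite group generated by reflections (elements of order 2 fixing a hyperplane) of a finite-dimensional complex vector space $V$; $\mathcal R$ is its set of reflections, $\epsilon=\det:W\to\{\pm1\}$ its sign character. $\mathbf k$ is a characteristic-0 field over which all irreducible representations of $W$ are defined and absolutely irreducible. $\mathcal H$ is the Lie subalgebra of $\mathbf kW$ (bracket $xy-yx$) generated by $\mathcal R$, $\mathcal H'$ its derived algebra. For $\rho\in\mathrm{Irr}(W)$ acting on $V_\rho$: $\mathrm X(\rho)=\{\eta\in\mathrm{Hom}(W,\{\pm1\}):\forall s\in\mathcal R,\ \eta(s)=-1\Rightarrow\rho(s)=\pm\mathrm{Id}\}$. *)

From HB Require Import structures.
From mathcomp Require Import all_boot all_order all_algebra all_fingroup all_solvable all_field all_character.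
Set Implicit Arguments. Unset Strict Implicit. Unset Printing Implicit Defensive.
Import Order.TTheory GRing.Theory Num.Theory.
Local Open Scope ring_scope.

Section Defs.
Variable gT : finGroupType.
Variable W : {group gT}.

(* Reflection representation: W acts on V = algC^n (right action on row
   vectors, MathComp convention). *)
Variable n : nat.
Variable rV : mx_representation algC W n.

Definition is_reflection (s : gT) : bool :=
  [&& s \in W, #[s]%g == 2%N & \rank (rV s - 1%:M) == 1%N].

Definition reflections : {set gT} := [set s | is_reflection s].

Definition is_reflection_group : Prop :=
  mx_faithful rV /\ (W :=: <<reflections>>)%g.

Variable F : fieldType.

Definition sgn_char (w : gT) : F := if \det (rV w) == 1 then 1 else -1.

Definition is_sign_hom (eta : gT -> F) : Prop :=
  {in W &, forall x y, eta (x * y)%g = eta x * eta y} /\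
  {in W, forall x, eta x = 1 \/ eta x = -1}.

Variable d : nat.
Variable rho : mx_representation F W d.

Definition in_X (eta : gT -> F) : Prop :=
  is_sign_hom eta /\
  forall s, s \in reflections -> eta s = -1 ->
    rho s = 1%:M \/ rho s = - 1%:M.

(* rho^* (x) epsilon  ~=  rho (x) eta, where rho^*(w) = rho(w^-1)^T,
   written out as the existence of an invertible intertwiner. *)
Definition dual_twist_iso (eta : gT -> F) : Prop :=
  exists P : 'M[F]_d, P \in unitmx /\
    {in W, forall w, (sgn_char w *: (rho (w^-1)%g)^T) *m P
                     = P *m (eta w *: rho w)}.

(* Bilinear form <x,y> = x *m B *m y^T on row vectors, invariant with
   character eps*eta:  <x rho(w), y rho(w)> = eps(w) eta(w) <x,y>. *)
Definition invariant_form (eta : gT -> F) (B : 'M[F]_d) : Prop :=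
  {in W, forall w, rho w *m B *m (rho w)^T = (sgn_char w * eta w) *: B}.

Definition in_osp (B : 'M[F]_d) (u : 'M[F]_d) : Prop :=
  \tr u = 0 /\ u *m B + B *m u^T = 0.

(* Hyperbolic form: V is an orthogonal direct sum of m hyperbolic planes
   span(e_i, f_i), i.e. there is a basis e_1..e_m, f_1..f_m (the rows of P)
   with <e_i,e_j> = <f_i,f_j> = 0 and <e_i,f_j> = <f_j,e_i> = delta_ij. *)
Definition hyperbolic (B : 'M[F]_d) : Prop :=
  exists m : nat, d = (m + m)%N /\
    exists P : 'M[F]_d, P \in unitmx /\
      P *m B *m P^T =
        \matrix_(i, j) ((((i : nat) + m == j)%N || ((j : nat) + m == i)%N)%:R : F).

(* The group algebra kW: elements are functions gT -> F (supported on W). *)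
Definition kW := {ffun gT -> F}.

Definition kW_mul (a b : kW) : kW :=
  [ffun g => \sum_(x in W) a x * b (x^-1 * g)%g].

Definition kW_br (a b : kW) : kW :=
  [ffun g => kW_mul a b g - kW_mul b a g].

Definition kW_of (s : gT) : kW := [ffun g => (g == s)%:R].

Inductive in_H : kW -> Prop :=
| H_gen s : s \in reflections -> in_H (kW_of s)
| H_zero : in_H [ffun => 0]
| H_add a b : in_H a -> in_H b -> in_H [ffun g => a g + b g]
| H_scale (c : F) a : in_H a -> in_H [ffun g => c * a g]
| H_br a b : in_H a -> in_H b -> in_H (kW_br a b).

Inductive in_H' : kW -> Prop :=
| H'_br a b : in_H a -> in_H b -> in_H' (kW_br a b)
| H'_zero : in_H' [ffun => 0]
| H'_add a b : in_H' a -> in_H' b -> in_H' [ffun g => a g + b g]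
| H'_scale (c : F) a : in_H' a -> in_H' [ffun g => c * a g].

Definition rho_alg (a : kW) : 'M[F]_d := \sum_(w in W) a w *: rho w.

End Defs.

From HB Require Import structures.
From mathcomp Require Import all_boot all_order all_algebra all_fingroup all_solvable all_field all_character.
From mathcomp Require Import zify.
Set Implicit Arguments. Unset Strict Implicit. Unset Printing Implicit Defensive.
Import Order.TTheory GRing.Theory Num.Theory.
Local Open Scope ring_scope.

(* Since eps(s) = -1 for a reflection s, comparing rho^* (x) eps with rho (x) eta at s
   shows that eta(s) = -1 exactly when rho(s) = +-1; the reflections generate W, so
   eta is unique. The inverse of an intertwiner is an invariant form B0, unique up to
   a scalar by Schur's lemma. Every reflection acts B0-skewly up to a scalar: either
   rho(s) = +-1, or eta(s) = 1 and rho(s) is an involution scaling B0 by -1; hence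
   commutators of elements of H are B0-skew and traceless. For hyperbolicity, if some
   reflection has eta(s) = 1, the two eigenspaces of the involution rho(s) are totally
   isotropic, hence in duality under the nondegenerate B0 and of equal dimension, which
   yields a hyperbolic basis; otherwise rho(W) consists of scalars and d = 1. *)

Section Involutions.
Variable F : fieldType.
Hypothesis two_neq0 : (2%:R : F) != 0.

Lemma eq_oppmx_self p q (X : 'M[F]_(p, q)) : X = - X -> X = 0.
Proof.
move=> hX; have : 2%:R *: X = 0 by rewrite scaler_nat mulr2n {2}hX subrr.
by move/eqP; rewrite scaler_eq0 (negPf two_neq0) => /eqP.
Qed.

Lemma involution_eigenbasis n (A : 'M[F]_n) : A *m A = 1%:M ->
  exists k k' (E : 'M_(k, n)) (G : 'M_(k', n)),
   [/\ (k + k')%N = n, row_free E && row_free G, E *m A = E, G *m A = - G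
     & (1%:M <= col_mx E G)%MS].
Proof.
move=> AA; set K1 := kermx (A - 1%:M); set K2 := kermx (A + 1%:M).
have sum1 : (1%:M <= K1 + K2)%MS.
  rewrite (_ : 1%:M = 2%:R^-1 *: (1%:M + A) + 2%:R^-1 *: (1%:M - A)); last first.
    by rewrite -scalerDr addrCA addrK -mulr2n -scaler_nat scalerA mulVf ?scale1r.
  apply: addmx_sub_adds; apply: scalemx_sub; rewrite sub_kermx.
    by rewrite mulmxDl mulmxBr mul1mx mulmx1 mulmxBr mulmx1 AA addrA subrK subrr.
  by rewrite mulmxBl !mulmxDr !mul1mx !mulmx1 AA [1%:M + _]addrC subrr.
have cap0 : (K1 :&: K2)%MS = 0.
  set C := (K1 :&: K2)%MS.
  have h1 : C *m (A - 1%:M) = 0 by apply/eqP; rewrite -sub_kermx capmxSl.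
  have h2 : C *m (A + 1%:M) = 0 by apply/eqP; rewrite -sub_kermx capmxSr.
  apply: eq_oppmx_self; apply/eqP; rewrite -addr_eq0.
  have <- : C *m (A + 1%:M) - C *m (A - 1%:M) = C + C.
    by rewrite -mulmxBr opprB addrC addrA subrK mulmxDr mulmx1.
  by rewrite h1 h2 subrr.
exists (\rank K1), (\rank K2), (row_base K1), (row_base K2); split.
- have := mxrank_sum_cap K1 K2; rewrite cap0 mxrank0 addn0 => <-.
  by apply/eqP; rewrite eqn_leq rank_leq_col -{1}(mxrank1 F n) mxrankS.
- by rewrite !row_base_free.
- have : (row_base K1 <= K1)%MS by rewrite eq_row_base.
  by rewrite sub_kermx mulmxBr mulmx1 subr_eq0 => /eqP.
- have : (row_base K2 <= K2)%MS by rewrite eq_row_base.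
  by rewrite sub_kermx mulmxDr mulmx1 addr_eq0 => /eqP.
by rewrite -addsmxE (adds_eqmx (eq_row_base _) (eq_row_base _)).
Qed.

Lemma det_involution_rank1 n (A : 'M[F]_n) : A *m A = 1%:M ->
  \rank (A - 1%:M) = 1%N -> \det A = -1.
Proof.
move=> AA r1; have [k [k' [E [G [def_n /andP[_ fG] hE hG sQ]]]]] := involution_eigenbasis AA.
subst n.
set Q := col_mx E G; have Qu : Q \in unitmx by rewrite -row_full_unit -sub1mx.
have QA : Q *m A = block_mx 1%:M 0 0 (- 1%:M) *m Q.
  by rewrite mul_col_mx hE hG mul_block_col !mul1mx !mul0mx addr0 add0r mulNmx mul1mx.
have k'1 : k' = 1%N.
  rewrite -r1 -(eqmxMfull _ (_ : row_full Q)); last by rewrite row_full_unit.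
  rewrite mul_col_mx !mulmxBr !mulmx1 hE hG subrr rank_col_0mx.
  rewrite -opprD eqmx_opp -mulr2n -scaler_nat eqmx_scale //.
  by move/eqP: fG.
subst k'; apply: (@mulIf _ (\det Q)); first by rewrite -unitfE -unitmxE.
rewrite mulrC -det_mulmx QA det_mulmx det_ublock det1 mul1r.
by rewrite -scaleN1r scalemx1 det_scalar expr1.
Qed.

Lemma hyperbolic_antidiag m (B P : 'M[F]_(m + m)) : P \in unitmx ->
  P *m B *m P^T = block_mx 0 1%:M 1%:M 0 -> hyperbolic B.
Proof.
move=> Pu PBP; exists m; split => //; exists P; split => //.
rewrite PBP; apply/matrixP => i j.
case: (split_ordP i) => i' ->; case: (split_ordP j) => j' ->.
all: rewrite ?block_mxEul ?block_mxEur ?block_mxEdl ?block_mxEdr !mxE /=.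
all: case: i' j' => [a Ha] [b Hb] /=; rewrite -?val_eqE /=.
all: by case: (a =P b) => ab; case: eqP => ?; case: eqP => ? //=; lia.
Qed.

Lemma mxrank_antidiag k k' (M : 'M[F]_(k, k')) :
  (\rank (block_mx 0 M M^T 0) <= \rank M + \rank M)%N.
Proof.
rewrite -[block_mx _ _ _ _]/(col_mx (row_mx 0 M) (row_mx M^T 0)) -addsmxE.
apply: leq_trans (mxrank_adds_leqif _ _) _; apply: leq_add.
  have -> : row_mx 0 M = M *m row_mx (0 : 'M_(k', k)) 1%:M.
    by rewrite mul_mx_row mulmx0 mulmx1.
  exact: mxrankM_maxl.
have -> : row_mx M^T 0 = M^T *m row_mx 1%:M (0 : 'M_(k, k')) by rewrite mul_mx_row mulmx0 mulmx1.
by rewrite -[X in (_ <= X)%N]mxrank_tr mxrankM_maxl.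
Qed.

Lemma hyperbolic_isotropic_split k k' (E : 'M[F]_(k, k + k')) (G : 'M_(k', k + k'))
    (B : 'M_(k + k')) :
  B^T = B -> B \in unitmx -> col_mx E G \in unitmx ->
  E *m B *m E^T = 0 -> G *m B *m G^T = 0 -> hyperbolic B.
Proof.
move=> Bs Bu Qu EE GG; set Q := col_mx E G in Qu; set M := E *m B *m G^T.
have GE : G *m B *m E^T = M^T by rewrite /M !trmx_mul trmxK Bs mulmxA.
have QBQ : Q *m B *m Q^T = block_mx 0 M M^T 0.
  by rewrite /Q tr_col_mx mul_col_mx mul_col_row EE GG GE.
have rkM : (k + k' <= \rank M + \rank M)%N.
  have <- : \rank (Q *m B *m Q^T) = (k + k')%N.
    by apply: mxrank_unit; rewrite !unitmx_mul Qu Bu unitmx_tr Qu.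
  by rewrite QBQ mxrank_antidiag.
have := rank_leq_row M; have := rank_leq_col M => rMk' rMk.
have k'k : k' = k by lia.
subst k'; have Mu : M \in unitmx by rewrite -row_free_unit /row_free; apply/eqP; lia.
pose N := (invmx M)^T; pose P := col_mx E (N *m G).
apply: (@hyperbolic_antidiag _ _ P).
  have -> : P = block_mx 1%:M 0 0 N *m Q.
    by rewrite /P /Q mul_block_col !mul1mx !mul0mx addr0 add0r.
  rewrite unitmx_mul Qu andbT unitmxE det_ublock det1 mul1r -unitmxE.
  by rewrite unitmx_tr unitmx_inv.
rewrite /P tr_col_mx mul_col_mx mul_col_row EE trmx_mul /N trmxK !mulmxA -/M mulmxV //.
rewrite -(mulmxA _ G B) -(mulmxA _ (G *m B) E^T) -(mulmxA _ (G *m B) G^T) GE GG.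
by rewrite mulmx0 mul0mx -trmx_mul mulmxV // trmx1.
Qed.

Lemma hyperbolic_anti_involution d (B u : 'M[F]_d) : u *m u = 1%:M ->
  u *m B *m u^T = - B -> B^T = B -> B \in unitmx -> hyperbolic B.
Proof.
move=> uu uBu Bs Bu.
have [k [k' [E [G [def_d /andP[_ _] hE hG sQ]]]]] := involution_eigenbasis uu.
subst d; have flip p q (X : 'M_(p, k + k')) (Y : 'M_(q, k + k')) :
    X *m u *m B *m (Y *m u)^T = - (X *m B *m Y^T).
  by rewrite trmx_mul !mulmxA -(mulmxA X u B) -(mulmxA X (u *m B) u^T) uBu mulmxN mulNmx.
apply: (hyperbolic_isotropic_split (E := E) (G := G) Bs Bu).
- by rewrite -row_full_unit -sub1mx.
- by apply: eq_oppmx_self; rewrite -flip hE.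
- by apply: eq_oppmx_self; rewrite -flip hG mulNmx raddfN /= mulNmx mulmxN opprK.
Qed.

End Involutions.

Section BilinearForms.
Variables (F : fieldType) (d : nat).
Implicit Types (B u v : 'M[F]_d).

Definition form_skew B u := u *m B + B *m u^T = 0.

Lemma form_skew0 B : form_skew B 0.
Proof. by rewrite /form_skew mul0mx trmx0 mulmx0 addr0. Qed.

Lemma form_skewD B u v : form_skew B u -> form_skew B v -> form_skew B (u + v).
Proof.
by rewrite /form_skew mulmxDl raddfD /= mulmxDr addrACA => -> ->; rewrite addr0.
Qed.

Lemma form_skewZ B u c : form_skew B u -> form_skew B (c *: u).
Proof.
by rewrite /form_skew linearZ /= -scalemxAl -scalemxAr -scalerDr => ->; rewrite scaler0.
Qed.

Lemma form_skew_commutator B u v :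
  form_skew B u -> form_skew B v -> form_skew B (u *m v - v *m u).
Proof.
rewrite /form_skew => /eqP; rewrite addr_eq0 => /eqP hu /eqP; rewrite addr_eq0 => /eqP hv.
rewrite mulmxBl raddfB /= mulmxBr !trmx_mul -!mulmxA hv hu.
rewrite !mulmxN !mulmxA hu hv !mulNmx !opprK.
by rewrite -[B *m v^T *m u^T - _]opprB subrr.
Qed.

Lemma form_skew_commutator_mod_scalar B u v a b :
    form_skew B (u - a%:M) -> form_skew B (v - b%:M) ->
  form_skew B (u *m v - v *m u).
Proof.
move=> hu hv; have := form_skew_commutator hu hv.
rewrite mulmxBl (mulmxBr (v - b%:M)) (scalar_mxC a (v - b%:M)) opprB addrA subrK.
by rewrite mulmxBr mulmxBl (scalar_mxC b u) opprB addrA subrK.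
Qed.

Lemma invariant_of_dual_intertwiner (R P : 'M[F]_d) (e h : F) :
    R \in unitmx -> P \in unitmx -> h * h = 1 ->
    (e *: (invmx R)^T) *m P = P *m (h *: R) ->
  R *m invmx P *m R^T = (e * h) *: invmx P.
Proof.
move=> Ru Pu hh /(congr1 (fun X => invmx P *m X *m invmx P)) /=.
rewrite !mulmxA mulVmx // mul1mx mulmxK // -scalemxAr -scalemxAl.
move/(congr1 (fun X => h *: (X *m R^T))) => /=.
rewrite -!scalemxAl !scalerA hh scale1r -(mulmxA (invmx P)) -trmx_mul mulmxV //.
by rewrite trmx1 mulmx1 mulrC => ->.
Qed.

Lemma invariant_forms_ratio_commute (R B B0 : 'M[F]_d) c :
    R \in unitmx -> B0 \in unitmx -> c != 0 ->
    R *m B0 *m R^T = c *: B0 -> R *m B *m R^T = c *: B ->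
  R *m (B *m invmx B0) = (B *m invmx B0) *m R.
Proof.
move=> Ru B0u c0 h0 h.
have RB0u : R *m B0 \in unitmx by rewrite unitmx_mul Ru B0u.
have RT : R^T = c *: (invmx B0 *m invmx R *m B0).
  apply: (can_inj (mulKmx RB0u)); rewrite h0 -scalemxAr !mulmxA.
  by rewrite -(mulmxA R B0) mulmxV // mulmx1 mulmxV // mul1mx.
have : R *m B *m invmx B0 *m invmx R *m B0 = B.
  by apply: (scalerI c0); rewrite -h RT -scalemxAr !mulmxA.
move/(congr1 (fun X => X *m invmx B0 *m R)) => /=.
rewrite -(mulmxA _ B0) mulmxV // mulmx1 -(mulmxA _ (invmx R)) mulVmx //.
by rewrite mulmx1 mulmxA.
Qed.

End BilinearForms.

Section ReflectionGroups.
Variables (gT : finGroupType) (W : {group gT}) (n : nat).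
Variable rV : mx_representation algC W n.

Lemma reflectionP s : s \in reflections rV ->
  [/\ s \in W, (s * s = 1)%g & \det (rV s) = -1].
Proof.
rewrite inE /is_reflection => /and3P[sW /eqP o2 /eqP r1].
have ss : (s * s = 1)%g by rewrite -expg2 -o2 expg_order.
split=> //; apply: det_involution_rank1 => //; first by rewrite pnatr_eq0.
by rewrite -repr_mxM // ss repr_mx1.
Qed.

Lemma sgn_char_reflection (F : fieldType) s :
  s \in reflections rV -> sgn_char rV F s = -1.
Proof. by case/reflectionP => _ _ det_s; rewrite /sgn_char det_s eqNr oner_eq0. Qed.

Lemma sgn_char_sqr (F : fieldType) w : sgn_char rV F w * sgn_char rV F w = 1.
Proof. by rewrite /sgn_char; case: ifP; rewrite ?mulr1 ?mulrNN ?mulr1. Qed.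

Lemma reflection_group_ind (P : pred gT) : is_reflection_group rV -> P 1%g ->
  {in W &, forall x y, P x -> P y -> P (x * y)%g} ->
  {in reflections rV, forall s, P s} -> {in W, forall x, P x}.
Proof.
move=> [_ gW] P1 PM PR.
have gS : group_set [set x in W | P x].
  apply/group_setP; split; first by rewrite inE group1 P1.
  by move=> x y; rewrite !inE => /andP[xW Px] /andP[yW Py]; rewrite groupM // PM.
have sRS : (<<reflections rV>> \subset Group gS)%g.
  rewrite gen_subG; apply/subsetP => s Rs; rewrite inE PR //.
  by case/reflectionP: Rs => ->.
by move=> x; rewrite gW => /(subsetP sRS); rewrite inE => /andP[].
Qed.

End ReflectionGroups.

Section GroupAlgebra.
Variables (gT : finGroupType) (W : {group gT}) (F : fieldType) (d : nat).
Variable rho : mx_representation F W d.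
Implicit Types a b : kW gT F.

Lemma rho_alg0 : rho_alg rho [ffun => 0] = 0.
Proof. by rewrite /rho_alg big1 // => w _; rewrite ffunE scale0r. Qed.

Lemma rho_algD a b : rho_alg rho [ffun g => a g + b g] = rho_alg rho a + rho_alg rho b.
Proof. by rewrite /rho_alg -big_split; apply: eq_bigr => w _; rewrite ffunE scalerDl. Qed.

Lemma rho_algB a b : rho_alg rho [ffun g => a g - b g] = rho_alg rho a - rho_alg rho b.
Proof. by rewrite /rho_alg -sumrB; apply: eq_bigr => w _; rewrite ffunE scalerBl. Qed.

Lemma rho_algZ c a : rho_alg rho [ffun g => c * a g] = c *: rho_alg rho a.
Proof. by rewrite /rho_alg scaler_sumr; apply: eq_bigr => w _; rewrite ffunE scalerA. Qed.

Lemma rho_alg_kW_of s : s \in W -> rho_alg rho (kW_of F s) = rho s.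
Proof.
move=> sW; rewrite /rho_alg (bigD1 s) //= big1 ?ffunE ?eqxx ?scale1r ?addr0 //.
by move=> w /andP[_ ws]; rewrite ffunE (negPf ws) scale0r.
Qed.

Lemma rho_algM a b : rho_alg rho (kW_mul W a b) = rho_alg rho a *m rho_alg rho b.
Proof.
rewrite /rho_alg mulmx_suml.
under eq_bigr do rewrite ffunE scaler_suml.
rewrite exchange_big /=; apply: eq_bigr => x xW.
rewrite mulmx_sumr (reindex_inj (mulgI x)) /=.
rewrite (eq_bigl (fun y => y \in W)) => [|y]; last by rewrite groupMl.
apply: eq_bigr => y yW.
by rewrite mulKg repr_mxM // -scalemxAl -scalemxAr scalerA.
Qed.

Lemma rho_alg_br a b :
  rho_alg rho (kW_br W a b) = rho_alg rho a *m rho_alg rho b - rho_alg rho b *m rho_alg rho a.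
Proof. by rewrite /kW_br rho_algB !rho_algM. Qed.

End GroupAlgebra.

Section Proposition.
Variables (gT : finGroupType) (W : {group gT}) (n : nat).
Variable rV : mx_representation algC W n.
Variables (F : fieldType) (d : nat) (rho : mx_representation F W d).

Lemma sign_eq (x y : F) : x = 1 \/ x = -1 -> y = 1 \/ y = -1 ->
  (x = -1 <-> y = -1) -> x = y.
Proof.
by move=> [] -> [] -> // [xy yx]; [exact: yx | exact/esym/xy].
Qed.

Lemma sign_hom_sqr (e : gT -> F) : is_sign_hom W e -> {in W, forall w, e w * e w = 1}.
Proof. by move=> [_ eV] w /eV[] ->; rewrite ?mulr1 ?mulrNN ?mulr1. Qed.

Lemma sign_hom1 (e : gT -> F) : is_sign_hom W e -> e 1%g = 1.
Proof.
move=> [eM eV]; have := eM 1%g 1%g (group1 W) (group1 W); rewrite mulg1.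
by case: (eV 1%g (group1 W)) => ->; rewrite ?mulrNN mulr1.
Qed.

Lemma dual_twist_scalar_reflection (e : gT -> F) s : (0 < d)%N ->
    dual_twist_iso rV rho e -> s \in reflections rV ->
    rho s = 1%:M \/ rho s = - 1%:M ->
  e s = -1.
Proof.
move=> d_gt0 [Q [Qu HQ]] Rs rho_s; have [sW ss _] := reflectionP Rs.
have := HQ s sW; have -> : (s^-1 = s)%g by apply/eqP; rewrite eq_invg_mul ss.
have [c [c0 ->]] : exists c, c != 0 /\ rho s = c%:M.
  case: rho_s => ->; first by exists 1; rewrite oner_neq0.
  by exists (-1); rewrite oppr_eq0 oner_neq0 -scaleN1r scalemx1.
rewrite tr_scalar_mx sgn_char_reflection // -scalemxAl mul_scalar_mx -scalemxAr.
rewrite mul_mx_scalar !scalerA => /eqP; rewrite -subr_eq0 -scalerBl scaler_eq0.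
have Q0 : Q != 0 by rewrite -mxrank_eq0 (mxrank_unit Qu) -lt0n.
rewrite (negPf Q0) orbF subr_eq0 mulN1r => /eqP ec.
by apply: (mulIf c0); rewrite -ec mulN1r.
Qed.

Lemma dual_twist_reflectionE (e : gT -> F) s : (0 < d)%N ->
    in_X rV rho e -> dual_twist_iso rV rho e -> s \in reflections rV ->
  e s = -1 <-> rho s = 1%:M \/ rho s = - 1%:M.
Proof.
move=> d_gt0 [_ eX] iso Rs.
by split; [exact: eX | exact: dual_twist_scalar_reflection].
Qed.

Lemma dual_twist_char_unique (eta eta' : gT -> F) : (0 < d)%N ->
    is_reflection_group rV ->
    in_X rV rho eta -> dual_twist_iso rV rho eta ->
    in_X rV rho eta' -> dual_twist_iso rV rho eta' ->
  {in W, eta' =1 eta}.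
Proof.
move=> d_gt0 RG X X_iso X' X'_iso x xW; apply/eqP; move: x xW.
have [[eM eV] _] := X; have [[eM' eV'] _] := X'.
apply: (reflection_group_ind (P := fun x => eta' x == eta x) RG).
- by rewrite /= (sign_hom1 X.1) (sign_hom1 X'.1).
- by move=> x y xW yW /eqP hx /eqP hy; rewrite /= eM' // eM // hx hy.
move=> s Rs; have [sW _ _] := reflectionP Rs.
apply/eqP/sign_eq; [exact: eV' | exact: eV |].
rewrite (dual_twist_reflectionE d_gt0 X X_iso Rs).
exact: (dual_twist_reflectionE d_gt0 X' X'_iso Rs).
Qed.

Lemma dual_twist_invariant_form (eta : gT -> F) : is_sign_hom W eta ->
  dual_twist_iso rV rho eta -> exists2 B0, B0 \in unitmx & invariant_form rV rho eta B0.
Proof.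
move=> eta_hom [P [Pu HP]]; exists (invmx P); first by rewrite unitmx_inv.
move=> w wW; apply: invariant_of_dual_intertwiner; rewrite ?repr_mx_unit //.
  exact: sign_hom_sqr.
by rewrite -repr_mxV //; apply: HP.
Qed.

Lemma invariant_form_unique (eta : gT -> F) (B0 B : 'M[F]_d) :
    mx_absolutely_irreducible rho -> is_sign_hom W eta ->
    B0 \in unitmx -> invariant_form rV rho eta B0 -> invariant_form rV rho eta B ->
  exists c, B = c *: B0.
Proof.
move=> abs eta_hom B0u B0inv Binv.
have: is_scalar_mx (B *m invmx B0).
  apply: (mx_abs_irr_cent_scalar abs); apply/centgmxP => w wW.
  have c0 : sgn_char rV F w * eta w != 0.
    apply: contraTneq isT => c0; have := congr1 (fun x => x * x) c0.
    rewrite /= mulrACA sgn_char_sqr sign_hom_sqr // mul0r mulr1 => /eqP.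
    by rewrite oner_eq0.
  symmetry; apply: invariant_forms_ratio_commute (B0inv w wW) (Binv w wW) => //.
  exact: repr_mx_unit.
by case/is_scalar_mxP => c Bc; exists c; rewrite -mul_scalar_mx -Bc mulmxKV.
Qed.

Lemma reflection_skew_mod_scalar (eta : gT -> F) (B : 'M[F]_d) s :
    in_X rV rho eta -> invariant_form rV rho eta B -> s \in reflections rV ->
  exists c, form_skew B (rho s - c%:M).
Proof.
move=> [[_ eV] eX] Binv Rs; have [sW ss _] := reflectionP Rs.
have [eta_s | eta_s] := eV s sW.
  exists 0; rewrite raddf0 subr0 /form_skew.
  have := Binv s sW; rewrite sgn_char_reflection // eta_s mulr1 scaleN1r => sBs.
  have ss1 : rho s *m rho s = 1%:M by rewrite -repr_mxM // ss repr_mx1.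
  rewrite -[rho s *m B]mulmx1 -[1%:M]trmx1 -ss1 trmx_mul mulmxA.
  by rewrite -(mulmxA _ B) mulmxA sBs mulNmx addNr.
case: (eX s Rs eta_s) => ->; first by exists 1; rewrite subrr; apply: form_skew0.
by exists (-1); rewrite raddfN subrr; apply: form_skew0.
Qed.

Lemma H_skew_mod_scalar (eta : gT -> F) (B : 'M[F]_d) a :
    in_X rV rho eta -> invariant_form rV rho eta B -> in_H rV a ->
  exists c, form_skew B (rho_alg rho a - c%:M).
Proof.
move=> X Binv; elim=> [s Rs | | a1 a2 _ [c1 h1] _ [c2 h2] | c a1 _ [c1 h1]
                     | a1 a2 _ [c1 h1] _ [c2 h2]].
- rewrite rho_alg_kW_of; last by case/reflectionP: Rs.
  exact: reflection_skew_mod_scalar X Binv Rs.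
- by exists 0; rewrite rho_alg0 raddf0 subrr; apply: form_skew0.
- by exists (c1 + c2); rewrite rho_algD raddfD opprD addrACA; apply: form_skewD.
- by exists (c * c1); rewrite rho_algZ -scale_scalar_mx -scalerBr; apply: form_skewZ.
exists 0; rewrite rho_alg_br raddf0 subr0.
exact: form_skew_commutator_mod_scalar h1 h2.
Qed.

Lemma H'_osp (eta : gT -> F) (B : 'M[F]_d) a :
    in_X rV rho eta -> invariant_form rV rho eta B -> in_H' rV a ->
  in_osp B (rho_alg rho a).
Proof.
move=> X Binv; elim=> [a1 a2 Ha1 Ha2 | | a1 a2 _ [t1 l1] _ [t2 l2] | c a1 _ [t1 l1]].
- have [c1 h1] := H_skew_mod_scalar X Binv Ha1.
  have [c2 h2] := H_skew_mod_scalar X Binv Ha2.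
  rewrite rho_alg_br; split; first by rewrite linearB /= mxtrace_mulC subrr.
  exact: form_skew_commutator_mod_scalar h1 h2.
- by rewrite rho_alg0; split; [exact: mxtrace0 | exact: form_skew0].
- by rewrite rho_algD; split; [rewrite mxtraceD t1 t2 addr0 | exact: form_skewD].
by rewrite rho_algZ; split; [rewrite mxtraceZ t1 mulr0 | exact: form_skewZ].
Qed.

Lemma irreducible_scalar_dim (rG : mx_representation F W d) :
  mx_irreducible rG -> {in W, forall w, is_scalar_mx (rG w)} -> (d <= 1)%N.
Proof.
case=> _ _ simple scalar_rG; pose V : 'M[F]_d := pid_mx 1.
have modV : mxmodule rG V.
  apply/mxmoduleP => w /scalar_rG /is_scalar_mxP[c ->].
  by rewrite mul_mx_scalar scalemx_sub.
have [d0 | d_gt0] := posnP d; first by rewrite d0.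
have nzV : V != 0 by rewrite -mxrank_eq0 rank_pid_mx.
by have /mxrankS := simple _ modV (submx1 V) nzV; rewrite mxrank1 rank_pid_mx.
Qed.

Lemma invariant_form_hyperbolic (eta : gT -> F) (B : 'M[F]_d) :
    (2%:R : F) != 0 -> is_reflection_group rV -> mx_irreducible rho -> in_X rV rho eta ->
    invariant_form rV rho eta B -> B^T = B -> B \in unitmx -> (1 < d)%N ->
  hyperbolic B.
Proof.
move=> two_neq0 RG irr [[_ eV] eX] Binv Bs Bu d_gt1.
have [/exists_inP[s Rs /eqP eta_s] | no_s] :=
  boolP [exists s in reflections rV, eta s == 1].
  have [sW ss _] := reflectionP Rs.
  apply: (hyperbolic_anti_involution two_neq0 (u := rho s)) => //.
    by rewrite -repr_mxM // ss repr_mx1.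
  by rewrite (Binv s sW) sgn_char_reflection // eta_s mulr1 scaleN1r.
suff /(irreducible_scalar_dim irr) : {in W, forall w, is_scalar_mx (rho w)}.
  by rewrite leqNgt d_gt1.
apply: (reflection_group_ind (P := fun w => is_scalar_mx (rho w)) RG).
- by rewrite /= repr_mx1 scalar_mx_is_scalar.
- move=> x y xW yW /= /is_scalar_mxP[a ra] /is_scalar_mxP[b rb].
  by rewrite repr_mxM // ra rb -scalar_mxM scalar_mx_is_scalar.
move=> s Rs; have [sW _ _] := reflectionP Rs.
have [eta_s | eta_s] := eV s sW.
  by move: no_s; rewrite negb_exists_in => /forall_inP/(_ s Rs); rewrite eta_s eqxx.
by case: (eX s Rs eta_s) => ->; rewrite /= -?scaleN1r ?scalemx1 scalar_mx_is_scalar.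
Qed.

End Proposition.

Unset Implicit Arguments.
Set Strict Implicit.

Theorem proposition2p3 (gT : finGroupType) (W : {group gT}) (n : nat)
  (rV : mx_representation algC W n) (F : fieldType) (d : nat)
  (rho : mx_representation F W d) :
  is_reflection_group rV ->
  [pchar F] =i pred0 ->
  group_splitting_field F W ->
  mx_irreducible rho ->
  forall eta : gT -> F,
    in_X rV rho eta -> dual_twist_iso rV rho eta ->
    (forall eta' : gT -> F,
       in_X rV rho eta' -> dual_twist_iso rV rho eta' -> {in W, eta' =1 eta})
    /\
    exists B0 : 'M[F]_d,
      [/\ B0 \in unitmx,
          invariant_form rV rho eta B0,
          (forall B : 'M[F]_d, invariant_form rV rho eta B ->
             exists c : F, B = c *: B0),
          (forall a, in_H' rV a -> in_osp B0 (rho_alg rho a)) &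
          (B0^T = B0 -> (1 < d)%N -> hyperbolic B0)].
Proof.
move=> RG char0 splitF irr eta X iso.
have two_neq0 : (2%:R : F) != 0 by rewrite (pcharf0P F).1.
have d_gt0 : (0 < d)%N by case: irr => _ nz _; rewrite lt0n -(mxrank1 F d) mxrank_eq0.
split=> [eta' X' iso' | ].
  exact: dual_twist_char_unique d_gt0 RG X iso X' iso'.
have [B0 B0u B0inv] := dual_twist_invariant_form X.1 iso.
exists B0; split=> //.
- by move=> B Binv; apply: invariant_form_unique (splitF _ rho irr) X.1 B0u B0inv Binv.
- by move=> a; apply: H'_osp X B0inv.
- by move=> B0s d_gt1; apply: invariant_form_hyperbolic two_neq0 RG irr X B0inv B0s B0u d_gt1.
Qed.
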